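(* Let $n\ge1$, $k\ge2$, $0<\rho<1$, and $m\in\{j/2^n:0\le j\le2^n\}$. Let $Y^1,\dots,Y^k\in\{0,1\}^n$ be $\rho$-correlated uniform binary strings. Then among all Boolean functions $f:\{0,1\}^n\to\{0,1\}$ with $\mathbb{E} f=m$, the agreement probability $\mathbb{P}(f(Y^1)=\cdots=f(Y^k))$ is maximized by some monotone function.
   Context: $\{0,1\}^n$ carries the uniform measure. $Y^1,\dots,Y^k$ are $\rho$-correlated if $Y^i=X+Z^i$ (mod 2 coordinatewise), where $X$ is uniform on $\{0,1\}^n$ and $Z^1,\dots,Z^k$ are independent of each other and of $X$, each with i.i.d. Bernoulli($\epsilon$) coordinates, $\epsilon=(1-\sqrt\rho)/2$. A function $f$ is monotone if $f(x)\le f(y)$ whenever $x_i\le y_i$ for all $i$. *)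

From HB Require Import structures.
From mathcomp Require Import all_boot all_order all_algebra.
From mathcomp Require Import reals.
Set Implicit Arguments. Unset Strict Implicit. Unset Printing Implicit Defensive.
Import Order.TTheory GRing.Theory Num.Theory.
Local Open Scope ring_scope.

Definition cube (n : nat) := {ffun 'I_n -> bool}.

Definition xorv n (x y : cube n) : cube n := [ffun i => x i (+) y i].

Section Defs.
Variable R : realType.

Definition eps (rho : R) : R := (1 - Num.sqrt rho) / 2.

Definition noise_prob (rho : R) n (z : cube n) : R :=
  \prod_(i < n) (if z i then eps rho else 1 - eps rho).

Definition mean n (f : cube n -> bool) : R :=
  (2 ^+ n)^-1 * \sum_(x : cube n) (f x)%:R.

(* P(f(Y^1) = ... = f(Y^k)) where Y^l = X + Z^l, X uniform, Z^1..Z^k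
   independent Bernoulli(eps) noise vectors, all independent of X. *)
Definition agree_prob (rho : R) n k (f : cube n -> bool) : R :=
  \sum_(x : cube n) \sum_(z : {ffun 'I_k -> cube n})
     (2 ^+ n)^-1 * (\prod_(l < k) noise_prob rho (z l)) *
     ([exists b : bool, [forall l : 'I_k, f (xorv x (z l)) == b]])%:R.

End Defs.

Definition monotone_bool n (f : cube n -> bool) : Prop :=
  forall x y : cube n, (forall i, x i ==> y i) -> f x ==> f y.

From HB Require Import structures.
From mathcomp Require Import all_boot all_order all_algebra.
From mathcomp Require Import reals.
From mathcomp Require Import lra zify.
Set Implicit Arguments. Unset Strict Implicit. Unset Printing Implicit Defensive.
Import Order.TTheory GRing.Theory Num.Theory.
Local Open Scope ring_scope.

(* Shifting argument.  Compressing f in direction i sorts it on every line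
   {v, v + e_i}; this keeps the mean and strictly increases the potential
   sum_x f(x) |x| unless f is already monotone in direction i.  Conditioning on
   all coordinates of X, Z^1, ..., Z^k except the i-th ones reduces the agreement
   probability to a one-dimensional problem for the restrictions H_l of f to k
   lines.  Writing "all equal" as a sum over the common value v, it becomes a sum
   over the value b of X_i of products over l of P(H_l(b + D) = v), D a
   Bernoulli(eps) bit; as eps <= 1/2, sorting every H_l aligns the larger of
   these two weights on the same b, which can only increase such sums of
   products.  Hence compression never decreases the agreement, and among the
   maximisers with mean m one of largest potential is monotone in every
   direction. *)

Section Rearrangement.
Variable R : realDomainType.

Lemma sum_prod_addb_le (I : Type) (r : seq I) (w : I -> bool -> R) (s : I -> bool)
    (t0 : bool) :
  (forall l, 0 <= w l (~~ t0) <= w l t0) ->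
  \sum_(b : bool) \prod_(l <- r) w l (b (+) s l) <=
  \sum_(b : bool) \prod_(l <- r) w l b.
Proof.
move=> w_sorted.
pose W (P : pred I) b := \prod_(l <- r | P l) w l b.
have split_s b c : \prod_(l <- r) w l (if s l then c else b) = W s c * W (predC s) b.
  rewrite (bigID s) /=; congr (_ * _); apply: eq_bigr => l; first by move->.
  by move/negPf->.
have -> : \sum_(b : bool) \prod_(l <- r) w l (b (+) s l) =
          W s false * W (predC s) true + W s true * W (predC s) false.
  rewrite big_bool -!split_s; congr (_ + _); apply: eq_bigr => l _; by case: (s l).
have -> : \sum_(b : bool) \prod_(l <- r) w l b =
          W s true * W (predC s) true + W s false * W (predC s) false.
  by rewrite big_bool -!split_s; congr (_ + _); apply: eq_bigr => l _; case: (s l).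
have W_sorted P : 0 <= W P (~~ t0) <= W P t0.
  by rewrite prodr_ge0 ?ler_prod // => l _; case/andP: (w_sorted l).
(* RHS - LHS = (W s true - W s false) * (W (predC s) true - W (predC s) false) *)
move: (W_sorted s) (W_sorted (predC s)); case: (t0) => /= /andP[? ?] /andP[? ?]; nra.
Qed.
End Rearrangement.

Lemma natr_prod_bool (R : comPzSemiRingType) (I : finType) (a : pred I) :
  \prod_(l : I) ((a l)%:R : R) = ([forall l, a l])%:R.
Proof.
case: (boolP [forall l, a l]) => [/forallP a_all | /forallPn[l0 /negPf a_l0]].
  by rewrite big1 // => l _; rewrite a_all.
by rewrite (bigD1 l0) //= a_l0 mul0r.
Qed.

Lemma natr_exists_all_eq (R : comPzSemiRingType) (I : finType) (i0 : I) (a : I -> bool) :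
  ([exists v, [forall l, a l == v]])%:R =
  \sum_(v : bool) \prod_(l : I) ((a l == v)%:R : R).
Proof.
rewrite big_bool /= !natr_prod_bool -natrD; congr (_%:R).
case: (boolP [forall l, a l == true]) => [/forallP all_true | not_all_true].
  have /negPf-> : ~~ [forall l, a l == false].
    by apply/forallPn; exists i0; rewrite (eqP (all_true i0)).
  have -> // : [exists v, [forall l, a l == v]].
  by apply/existsP; exists true; apply/forallP.
case: existsP => [[[] all_v] | no_v]; first by rewrite all_v in not_all_true.
  by rewrite all_v.
by case: forallP => // all_false; case: no_v; exists false; apply/forallP.
Qed.

Definition compress1 (G : bool -> bool) (t : bool) : bool :=
  if t then G false || G true else G false && G true.

Lemma compress1_mono (G : bool -> bool) : compress1 G false ==> compress1 G true.
Proof. by rewrite /compress1; case: (G false); case: (G true). Qed.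

Lemma compress1_addb (G : bool -> bool) (t : bool) :
  G t = compress1 G (t (+) (G false && ~~ G true)).
Proof. by rewrite /compress1; case: t; case: (G false); case: (G true). Qed.

Lemma compress1_add (G : bool -> bool) :
  (compress1 G true + compress1 G false = G true + G false)%N.
Proof. by rewrite /compress1; case: (G false); case: (G true). Qed.

Section OneDimensional.
Variables (R : realDomainType) (e : R).

Definition bern (t : bool) : R := if t then e else 1 - e.

Definition noisy_prob (G : bool -> bool) (b v : bool) : R :=
  \sum_(t : bool) bern t * (G (b (+) t) == v)%:R.

Definition agree1 {k} (H : 'I_k -> bool -> bool) : R :=
  \sum_(b : bool) \sum_(c : {ffun 'I_k -> bool})
    (\prod_(l < k) bern (c l)) * ([exists v, [forall l, H l (b (+) c l) == v]])%:R.

Lemma noisy_prob_addb (G G' : bool -> bool) (s : bool) b v :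
  (forall t, G t = G' (t (+) s)) -> noisy_prob G b v = noisy_prob G' (b (+) s) v.
Proof. by move=> GG'; apply: eq_bigr => t _; rewrite GG' addbAC. Qed.

Hypothesis e_range : 0 <= e <= 1 - e.

Lemma bern_ge0 t : 0 <= bern t.
Proof. by case/andP: e_range; case: t => /= *; lra. Qed.

Lemma noisy_prob_sorted (G : bool -> bool) v :
  G false ==> G true -> 0 <= noisy_prob G (~~ v) v <= noisy_prob G v v.
Proof.
rewrite /noisy_prob !big_bool /bern /=; case/andP: e_range => e_ge0 e_le.
by case: v => /=; case: (G false); case: (G true) => //= _; lra.
Qed.

Lemma agree1E k (H : 'I_k -> bool -> bool) : (0 < k)%N ->
  agree1 H = \sum_(v : bool) \sum_(b : bool) \prod_(l < k) noisy_prob (H l) b v.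
Proof.
move=> k_gt0; rewrite [RHS]exchange_big; apply: eq_bigr => b _ /=.
under eq_bigr => c _ do rewrite (natr_exists_all_eq _ (Ordinal k_gt0)) mulr_sumr.
rewrite exchange_big; apply: eq_bigr => v _.
under eq_bigr => c _ do rewrite -big_split /=.
by rewrite -(bigA_distr_bigA (fun l t => bern t * (H l (b (+) t) == v)%:R)).
Qed.

Lemma agree1_compress1 k (H : 'I_k -> bool -> bool) : (0 < k)%N ->
  agree1 H <= agree1 (fun l => compress1 (H l)).
Proof.
move=> k_gt0; rewrite !agree1E //; apply: ler_sum => v _.
have shift l b : noisy_prob (H l) b v =
    noisy_prob (compress1 (H l)) (b (+) (H l false && ~~ H l true)) v.
  exact/noisy_prob_addb/compress1_addb.
under eq_bigr => b _ do under eq_bigr => l _ do rewrite shift.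
apply: (@sum_prod_addb_le _ _ _ _ _ v) => l.
exact/noisy_prob_sorted/compress1_mono.
Qed.

Lemma eq_agree1 k (H H' : 'I_k -> bool -> bool) :
  (forall l, H l =1 H' l) -> agree1 H = agree1 H'.
Proof.
move=> HH'; apply: eq_bigr => b _; apply: eq_bigr => c _.
by under eq_existsb => v do under eq_forallb => l do rewrite HH'.
Qed.

End OneDimensional.

Definition cube_set n (x : cube n) (i : 'I_n) (t : bool) : cube n :=
  [ffun j => if j == i then t else x j].

Definition cube_flip n (x : cube n) (i : 'I_n) (b : bool) : cube n :=
  cube_set x i (x i (+) b).

Definition compress n (f : cube n -> bool) (i : 'I_n) : {ffun cube n -> bool} :=
  [ffun v => compress1 (fun t => f (cube_set v i t)) (v i)].

Definition weight n (x : cube n) : nat := \sum_(j < n) x j.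

Definition potential n (f : cube n -> bool) : nat := \sum_(x : cube n) f x * weight x.

Section Coordinate.
Variables (n : nat) (i : 'I_n).

Lemma cube_set_at (x : cube n) t : cube_set x i t i = t.
Proof. by rewrite ffunE eqxx. Qed.

Lemma cube_set_id (x : cube n) : cube_set x i (x i) = x.
Proof. by apply/ffunP => j; rewrite ffunE; case: eqP => // ->. Qed.

Lemma cube_set_set (x : cube n) s t : cube_set (cube_set x i s) i t = cube_set x i t.
Proof. by apply/ffunP => j; rewrite !ffunE; case: eqP. Qed.

Lemma cube_flipK b : involutive (fun x : cube n => cube_flip x i b).
Proof. by move=> x; rewrite /cube_flip cube_set_set cube_set_at addbK cube_set_id. Qed.

Lemma xorv_cube_set (x y : cube n) b c :
  xorv (cube_set x i b) (cube_set y i c) = cube_set (xorv x y) i (b (+) c).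
Proof. by apply/ffunP => j; rewrite !ffunE; case: eqP. Qed.

Lemma compress_set (f : cube n -> bool) v t :
  compress f i (cube_set v i t) = compress1 (fun s => f (cube_set v i s)) t.
Proof. by rewrite ffunE cube_set_at /compress1 !cube_set_set. Qed.

Lemma sum_cube_set (V : nmodType) (F : cube n -> V) :
  \sum_(x : cube n) \sum_(b : bool) F (cube_set x i b) = (\sum_(x : cube n) F x) *+ 2.
Proof.
transitivity (\sum_(b : bool) \sum_(x : cube n) F (cube_flip x i b)).
  rewrite [RHS]exchange_big; apply: eq_bigr => x _.
  by rewrite (reindex_inj (can_inj (addKb (x i)))).
rewrite (eq_bigr (fun _ => \sum_x F x)) ?sumr_const ?card_bool // => b _.
by rewrite [RHS](reindex_inj (can_inj (cube_flipK b))).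
Qed.

Lemma sum_cube_set_ffun (V : nmodType) k (F : {ffun 'I_k -> cube n} -> V) :
  \sum_(z : {ffun 'I_k -> cube n}) \sum_(c : {ffun 'I_k -> bool})
    F [ffun l => cube_set (z l) i (c l)] =
  (\sum_(z : {ffun 'I_k -> cube n}) F z) *+ 2 ^ k.
Proof.
pose flip (c : {ffun 'I_k -> bool}) (z : {ffun 'I_k -> cube n}) : {ffun 'I_k -> cube n} :=
  [ffun l => cube_flip (z l) i (c l)].
have flipK c : involutive (flip c).
  by move=> z; apply/ffunP => l; rewrite !ffunE cube_flipK.
transitivity
  (\sum_(c : {ffun 'I_k -> bool}) \sum_(z : {ffun 'I_k -> cube n}) F (flip c z)).
  rewrite [RHS]exchange_big; apply: eq_bigr => z _.
  pose shift (c : {ffun 'I_k -> bool}) : {ffun 'I_k -> bool} := [ffun l => z l i (+) c l].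
  have shiftK : involutive shift by move=> c; apply/ffunP => l; rewrite !ffunE addKb.
  rewrite (reindex_inj (can_inj shiftK)); apply: eq_bigr => c _.
  by congr F; apply/ffunP => l; rewrite !ffunE.
rewrite (eq_bigr (fun _ => \sum_z F z)) => [|c _].
  by rewrite sumr_const card_ffun card_bool card_ord.
by rewrite [RHS](reindex_inj (can_inj (flipK c))).
Qed.

Lemma weight_set (x : cube n) t :
  weight (cube_set x i t) = (weight (cube_set x i false) + t)%N.
Proof.
rewrite /weight (bigD1 i) // [in RHS](bigD1 i) //= !cube_set_at add0n addnC.
by congr (_ + _)%N; apply: eq_bigr => j /negPf j_neq_i; rewrite !ffunE j_neq_i.
Qed.

Lemma potential_compress (f : cube n -> bool) :
  (potential (compress f i) * 2 =
   potential f * 2 +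
   \sum_(x : cube n) (f (cube_set x i false) && ~~ f (cube_set x i true)))%N.
Proof.
have mul2E (m : nat) : (m * 2)%N = (m *+ 2)%R by rewrite -mulr_natr.
rewrite !mul2E -!sum_cube_set -big_split /=.
apply: eq_bigr => x _; rewrite !big_bool /= !compress_set /compress1 !(weight_set x true).
by case: (f (cube_set x i false)); case: (f (cube_set x i true)) => /=; lia.
Qed.

Lemma potential_compress_gt (f : cube n -> bool) v :
  f (cube_set v i false) -> ~~ f (cube_set v i true) ->
  (potential f < potential (compress f i))%N.
Proof.
move=> f0 /negPf f1; rewrite -(ltn_pmul2r (isT : 0 < 2)%N) potential_compress.
by rewrite -[X in (X < _)%N]addn0 ltn_add2l (bigD1 v) //= f0 f1.
Qed.

End Coordinate.

Lemma monotone_coordinatewise n (f : cube n -> bool) :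
  (forall i v, f (cube_set v i false) ==> f (cube_set v i true)) -> monotone_bool f.
Proof.
move=> f_mono x y x_le_y; apply/implyP.
suff agree_from m (x' : cube n) : (forall j, x' j ==> y j) ->
    (forall j : 'I_n, (m <= j)%N -> x' j = y j) -> f x' -> f y.
  by apply: (agree_from n x) => // j; rewrite leqNgt ltn_ord.
elim: m x' => [|m IHm] x' x'_le_y agree fx'.
  by have -> : y = x' by apply/ffunP => j; rewrite agree.
have [m_lt_n | n_le_m] := ltnP m n; last first.
  by apply: (IHm x') => // j; rewrite leqNgt (leq_trans (ltn_ord j) n_le_m).
pose i := Ordinal m_lt_n.
apply: (IHm (cube_set x' i (y i))).
- by move=> j; rewrite ffunE; case: eqP => [-> | _]; [apply/implyP | apply: x'_le_y].
- move=> j; rewrite ffunE leq_eqVlt => /orP[/eqP m_eq_j | m_lt_j].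
    have -> : j = i by apply: val_inj; rewrite /= m_eq_j.
    by rewrite eqxx.
  have /negPf-> : j != i by rewrite -val_eqE neq_ltn m_lt_j orbT.
  exact: agree.
- move: (x'_le_y i) (cube_set_id i x') (f_mono i x') fx'.
  by case: (x' i); case: (y i) => //= _ -> // /implyP.
Qed.

Section Agreement.
Variables (R : realType) (rho : R).

Lemma eps_range : rho <= 1 -> 0 <= eps rho <= 1 - eps rho.
Proof.
move=> rho_le1; have sqrt_ge0 := sqrtr_ge0 rho.
have sqrt_le1 : Num.sqrt rho <= 1.
  by case: (lerP 0 rho) => [rho_ge0|/ltW/ler0_sqrtr-> //]; rewrite -sqrtr1 ler_sqrt.
by rewrite /eps; apply/andP; split; lra.
Qed.

Definition agree_term n k (f : cube n -> bool) x (z : {ffun 'I_k -> cube n}) : R :=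
  (2 ^+ n)^-1 * (\prod_(l < k) noise_prob rho (z l)) *
  ([exists b, [forall l, f (xorv x (z l)) == b]])%:R.

Lemma agree_probE n k (f : cube n -> bool) :
  agree_prob rho k f = \sum_x \sum_(z : {ffun 'I_k -> cube n}) agree_term f x z.
Proof. by []. Qed.

Lemma noise_prob_set n (i : 'I_n) (z : cube n) t :
  noise_prob rho (cube_set z i t) =
  (\prod_(j < n | j != i) bern (eps rho) (z j)) * bern (eps rho) t.
Proof.
rewrite /noise_prob (bigD1 i) //= mulrC cube_set_at; congr (_ * _).
by apply: eq_bigr => j /negPf j_neq_i; rewrite ffunE j_neq_i.
Qed.

Lemma sum_agree_term_set n k (i : 'I_n) (f : cube n -> bool) x z :
  \sum_(b : bool) \sum_(c : {ffun 'I_k -> bool})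
    agree_term f (cube_set x i b) [ffun l => cube_set (z l) i (c l)] =
  (2 ^+ n)^-1 * (\prod_(l < k) \prod_(j < n | j != i) bern (eps rho) (z l j)) *
  agree1 (eps rho) (fun l t => f (cube_set (xorv x (z l)) i t)).
Proof.
rewrite /agree1 mulr_sumr; apply: eq_bigr => b _.
rewrite mulr_sumr; apply: eq_bigr => c _.
rewrite /agree_term; under eq_bigr => l _ do rewrite ffunE noise_prob_set.
rewrite big_split /= !mulrA.
by under eq_existsb => v do under eq_forallb => l do rewrite ffunE xorv_cube_set.
Qed.

Lemma agree_prob_orbit n k (i : 'I_n) (f : cube n -> bool) :
  agree_prob rho k f *+ 2 ^ k.+1 =
  \sum_(x : cube n) \sum_(z : {ffun 'I_k -> cube n})
    (2 ^+ n)^-1 * (\prod_(l < k) \prod_(j < n | j != i) bern (eps rho) (z l j)) *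
    agree1 (eps rho) (fun l t => f (cube_set (xorv x (z l)) i t)).
Proof.
rewrite agree_probE expnS mulrnA -(sum_cube_set i) -sumrMnl.
under eq_bigr => x _ do rewrite -sumrMnl.
under eq_bigr => x _ do under eq_bigr => b _ do rewrite -(sum_cube_set_ffun i).
under eq_bigr => x _ do rewrite exchange_big.
by under eq_bigr => x _ do under eq_bigr => z _ do rewrite sum_agree_term_set.
Qed.

Lemma agree_prob_compress n k (f : cube n -> bool) (i : 'I_n) :
  (0 < k)%N -> rho <= 1 -> agree_prob rho k f <= agree_prob rho k (compress f i).
Proof.
move=> k_gt0 /eps_range e_range.
rewrite -(ler_pMn2r (expn_gt0 2 k.+1)) !(agree_prob_orbit _ i).
apply: ler_sum => x _; apply: ler_sum => z _; apply: ler_wpM2l.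
  rewrite mulr_ge0 ?invr_ge0 ?exprn_ge0 // prodr_ge0 // => l _.
  by rewrite prodr_ge0 // => j _; apply: bern_ge0.
rewrite (eq_agree1 _ (fun l t => compress_set i f (xorv x (z l)) t)).
exact: agree1_compress1.
Qed.

Lemma mean_compress n (f : cube n -> bool) (i : 'I_n) : mean R (compress f i) = mean R f.
Proof.
rewrite /mean; congr (_ * _).
suff: (\sum_x ((compress f i x)%:R : R)) *+ 2 = (\sum_x ((f x)%:R : R)) *+ 2.
  by move/eqP; rewrite eqrMn2r => /eqP.
rewrite -!(sum_cube_set i); apply: eq_bigr => x _.
rewrite !big_bool /= !compress_set -!natrD.
by rewrite (compress1_add (fun t => f (cube_set x i t))).
Qed.

Lemma eq_mean n (f g : cube n -> bool) : f =1 g -> mean R f = mean R g.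
Proof. by move=> fg; congr (_ * _); apply: eq_bigr => x _; rewrite fg. Qed.

Lemma eq_agree_prob n k (f g : cube n -> bool) :
  f =1 g -> agree_prob rho k f = agree_prob rho k g.
Proof.
move=> fg; apply: eq_bigr => x _; apply: eq_bigr => z _.
by under eq_existsb => b do under eq_forallb => l do rewrite fg.
Qed.

Lemma exists_mean n j : (j <= 2 ^ n)%N ->
  exists g : {ffun cube n -> bool}, mean R g = j%:R / 2 ^+ n.
Proof.
move=> j_le; exists [ffun x => (enum_rank x < j)%N].
rewrite /mean mulrC -natr_sum; congr (_%:R * _).
under eq_bigr => x _ do rewrite ffunE.
rewrite (reindex (@enum_val _ predT)) /=; last first.
  by exists enum_rank => x _; [rewrite enum_valK | rewrite enum_rankK].
under eq_bigr => x _ do rewrite enum_valK.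
have -> : #|predT : pred (cube n)| = (2 ^ n)%N.
  by rewrite cardT -cardE card_ffun card_bool card_ord.
rewrite (eq_bigr (fun i : 'I__ => if (i < j)%N then 1%N else 0%N)) => [|i _].
  by rewrite -big_mkcond -(big_ord_widen _ (fun _ => 1%N) j_le) sum1_card card_ord.
by case: ltnP.
Qed.

End Agreement.

Theorem corollary2 (R : realType) (n k j : nat) (rho : R) :
  (1 <= n)%N -> (2 <= k)%N -> 0 < rho -> rho < 1 -> (j <= 2 ^ n)%N ->
  exists f : cube n -> bool,
    [/\ monotone_bool f,
        mean R f = j%:R / (2 ^+ n) &
        forall g : cube n -> bool, mean R g = j%:R / (2 ^+ n) ->
          agree_prob rho k g <= agree_prob rho k f].
Proof.
move=> _ k_ge2 _ /ltW rho_le1 j_le.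
have k_gt0 : (0 < k)%N by apply: leq_trans k_ge2.
pose m : R := j%:R / 2 ^+ n.
have [g0 g0_mean] := exists_mean R j_le.
have [|gm /eqP gm_mean gm_max] :=
  @arg_maxP _ _ _ g0 (fun g => mean R g == m) (fun g => agree_prob rho k g).
  exact/eqP.
pose optimal (g : {ffun cube n -> bool}) :=
  (mean R g == m) && (agree_prob rho k gm <= agree_prob rho k g).
have [|f /andP[/eqP f_mean gm_le_f] f_max] := @arg_maxnP _ gm optimal (@potential n).
  by rewrite /optimal gm_mean eqxx lexx.
exists f; split => // [|g g_mean].
  apply: monotone_coordinatewise => i v; apply/implyP => f0; apply/negPn/negP => f1.
  suff /f_max : optimal (compress f i).
    by apply/negP; rewrite -ltnNge (potential_compress_gt f0 f1).
  by rewrite /optimal mean_compress f_mean eqxx (le_trans gm_le_f) ?agree_prob_compress.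
have g_ffun : [ffun x => g x] =1 g by move=> x; rewrite ffunE.
rewrite -(eq_agree_prob _ _ g_ffun); apply: le_trans gm_le_f; apply: gm_max.
by rewrite (eq_mean _ g_ffun) g_mean.
Qed.
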